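(* Let $p$ be a prime and $S\subseteq\mathbb{F}_p\setminus\{0\}$ a symmetric set such that $G=\Gamma(\mathbb{F}_p,S)$ is self-complementary (isomorphic to its complement). Then $\Theta_{\mathrm{lin}}(G)=\sqrt p$.
   Context: For a symmetric set $S\subseteq\mathbb{F}_p\setminus\{0\}$ ($S=-S$), the Cayley graph $\Gamma(\mathbb{F}_p,S)$ has vertex set $\mathbb{F}_p$, with $u\sim v$ iff $u-v\in S$. $G^k$ is the $k$-fold strong product (distinct vertices adjacent iff in each coordinate they are equal or adjacent). $\alpha_{\mathrm{lin}}(G^k)$ is the largest size of an independent set of $G^k$ that is a linear subspace of $\mathbb{F}_p^k$, and $\Theta_{\mathrm{lin}}(G)=\sup_k\alpha_{\mathrm{lin}}(G^k)^{1/k}$. *)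

From HB Require Import structures.
From mathcomp Require Import all_boot all_order all_fingroup all_algebra.
From mathcomp Require Import all_classical all_reals all_analysis.
Set Implicit Arguments. Unset Strict Implicit. Unset Printing Implicit Defensive.
Import Order.TTheory GRing.Theory Num.Theory.
Local Open Scope ring_scope.
Local Open Scope classical_set_scope.

Section Defs.
Variable p : nat.

Definition symmetric_conn (S : {set 'F_p}) : Prop :=
  0 \notin S /\ forall x : 'F_p, x \in S -> - x \in S.

Definition cay_adj (S : {set 'F_p}) (u v : 'F_p) : bool := (u - v) \in S.

Definition cay_cadj (S : {set 'F_p}) (u v : 'F_p) : bool :=
  (u != v) && ((u - v) \notin S).

Definition self_complementary (S : {set 'F_p}) : Prop :=
  exists f : {perm 'F_p}, forall u v : 'F_p,
    cay_adj S u v = cay_cadj S (f u) (f v).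

Definition strong_adj (S : {set 'F_p}) (k : nat) (u v : 'rV['F_p]_k) : bool :=
  (u != v) && [forall i : 'I_k, (u ord0 i == v ord0 i) || cay_adj S (u ord0 i) (v ord0 i)].

Definition is_subspace (k : nat) (V : {set 'rV['F_p]_k}) : bool :=
  (0 \in V) && [forall a : 'F_p, forall u, forall v,
     (u \in V) ==> (v \in V) ==> (a *: u + v \in V)].

Definition is_independent (S : {set 'F_p}) (k : nat) (V : {set 'rV['F_p]_k}) : bool :=
  [forall u in V, forall v in V, ~~ strong_adj S u v].

Definition alpha_lin (S : {set 'F_p}) (k : nat) : nat :=
  \max_(V : {set 'rV['F_p]_k} | is_subspace V && is_independent S V) #|V|.

Definition Theta_lin (R : realType) (S : {set 'F_p}) : R :=
  sup [set x : R | exists k : nat, (0 < k)%N /\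
         x = ((alpha_lin S k)%:R `^ (k%:R)^-1)%R].
End Defs.

From HB Require Import structures.
From mathcomp Require Import all_boot all_order all_fingroup all_algebra all_solvable.
From mathcomp Require Import mpoly.
From mathcomp Require Import all_classical all_reals all_analysis.
Import Order.TTheory GRing.Theory Num.Theory.
Set Implicit Arguments. Unset Strict Implicit. Unset Printing Implicit Defensive.
Local Open Scope ring_scope.

(* Let N be the set of non-neighbours of 0 other than 0.  Counting degrees in
   G and in its complement gives #|S| = #|N| = (p - 1) / 2.

   Upper bound.  A linear independent set V of G^k is the image x |-> x B of
   a row-free d x k matrix B, and every nonzero vector of V has a coordinate
   in N (it is not adjacent to 0).  The polynomial
   prod_(i < k) prod_(n in N) ((x B)_i - n) then vanishes on F_p^d except at
   0, while its degree k #|N| would force its values to sum to 0 if it were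
   below d (p - 1) (power sums of F_p vanish below exponent p - 1).  Hence
   d (p - 1) <= k #|N|, i.e. 2 d <= k, and alpha_lin(G^k)^2 <= p^k.

   Lower bound.  The translations form a Sylow p-subgroup of Aut(G), as do
   their conjugates by a complementing permutation f; by Sylow's theorem f
   can be corrected to an affine complementing map w |-> b + a w.  Then a S
   is contained in N, and the line spanned by (1, a) is an independent
   subspace of G^2 of size p.  Thus alpha_lin(G^2) = p = sup. *)

Section PowerSums.
Variable p : nat.
Hypothesis p_pr : prime p.

(* Power sums over F_p vanish below the exponent p - 1: for e = 0 the sum is
   p = 0, otherwise some c <> 0 has c^e <> 1 and the sum is invariant under
   t |-> c t. *)
Lemma sum_Fp_expr_eq0 e : (e < p.-1)%N -> \sum_(t : 'F_p) t ^+ e = 0.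
Proof.
case: e => [|e] lt_e_p.
  by rewrite (eq_bigr (fun _ => 1)) ?sumr_const ?card_Fp ?pchar_Fp_0 // => t.
have [c /andP[c0 ce1]] : exists c : 'F_p, (c != 0) && (c ^+ e.+1 != 1).
  apply/existsP; apply: contraT; rewrite negb_exists => /forallP all_roots.
  pose q : {poly 'F_p} := 'X^(e.+1) - 1.
  have q0 : q != 0 by rewrite -size_poly_eq0 size_XnsubC.
  have := @max_poly_roots _ q (enum [pred x : 'F_p | x != 0]) q0.
  have -> : all (root q) (enum [pred x : 'F_p | x != 0]).
    apply/allP => x; rewrite mem_enum inE => x0; rewrite /root !hornerE.
    by move: (all_roots x); rewrite x0 /= negbK => /eqP ->; rewrite subrr.
  rewrite enum_uniq size_XnsubC // -cardE cardC1 card_Fp // => /(_ isT isT).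
  by rewrite ltnNge lt_e_p.
have sum_scaled : \sum_(t : 'F_p) t ^+ e.+1 = c ^+ e.+1 * \sum_(t : 'F_p) t ^+ e.+1.
  rewrite mulr_sumr (reindex_inj (mulfI c0)) /=.
  by apply: eq_bigr => t _; rewrite exprMn.
move/eqP: sum_scaled; rewrite -subr_eq0 -{1}(mul1r (\sum_t _)) -mulrBl mulf_eq0.
by rewrite subr_eq0 eq_sym (negbTE ce1) => /eqP.
Qed.

(* Summing a polynomial of total degree < d (p - 1) over all of F_p^d gives 0:
   each monomial has a variable of degree < p - 1, whose power sum vanishes. *)
Lemma sum_meval_eq0 d (P : {mpoly 'F_p[d]}) : (msize P <= d * p.-1)%N ->
  \sum_(f : {ffun 'I_d -> 'F_p}) P.@[f] = 0.
Proof.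
move=> size_P.
under eq_bigr do rewrite mevalE.
rewrite exchange_big /=; apply: big1_seq => m /andP[_ mP].
rewrite -mulr_sumr -(bigA_distr_bigA (fun i (t : 'F_p) => t ^+ m i)) /=.
have [i lt_mi] : exists i, (m i < p.-1)%N.
  apply/existsP; apply: contraT; rewrite negb_exists => /forallP large_m.
  have : (d * p.-1 <= mdeg m)%N.
    rewrite mdegE -[X in (X * _)%N]card_ord -sum_nat_const; apply: leq_sum => j _.
    by rewrite leqNgt large_m.
  by rewrite leqNgt (leq_trans (msize_mdeg_lt mP)).
by rewrite (bigD1 i) //= sum_Fp_expr_eq0 // mul0r mulr0.
Qed.
End PowerSums.

Section MpolySize.
Variables (R : idomainType) (n : nat).

(* Subadditivity of total degree under products, in msize form (msize is the
   total degree plus one, and 0 for the zero polynomial). *)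
Lemma msizeM_leq (P Q : {mpoly R[n]}) : (msize (P * Q) <= (msize P + msize Q).-1)%N.
Proof.
have [->|P0] := eqVneq P 0; first by rewrite mul0r msize0.
have [->|Q0] := eqVneq Q 0; first by rewrite mulr0 msize0.
by rewrite msizeM.
Qed.

Lemma msize_prod_leq (I : Type) (r : seq I) (P : pred I) (F : I -> {mpoly R[n]})
    (deg : I -> nat) :
  (forall i, P i -> msize (F i) <= (deg i).+1)%N ->
  (msize (\prod_(i <- r | P i) F i) <= (\sum_(i <- r | P i) deg i).+1)%N.
Proof.
move=> size_F; elim: r => [|x r IHr]; first by rewrite !big_nil msize1.
rewrite !big_cons; case: ifP => // Px.
apply: leq_trans (msizeM_leq _ _) _.
have := leq_add (size_F x Px) IHr; rewrite addSn addnS /=.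
by rewrite -subn1 leq_subLR add1n.
Qed.

Lemma msize_affine (c : 'I_n -> R) (b : R) :
  (msize (\sum_(j < n) c j *: 'X_j - b%:MP) <= 2)%N.
Proof.
apply: leq_trans (msizeD_le _ _) _; rewrite geq_max msizeN.
rewrite msizeC (leq_trans (leq_b1 _)) // andbT.
apply: leq_trans (msize_sum _ _ _) _; apply/bigmax_leqP => j _.
by apply: leq_trans (msizeZ_le _ _) _; rewrite msizeX mdeg1.
Qed.
End MpolySize.

Section RowSpace.
Variables (F : finFieldType) (k : nat).

Lemma subspace_row_free_image (V : {set 'rV[F]_k}) : 0 \in V ->
    (forall (a : F) u v, u \in V -> v \in V -> a *: u + v \in V) ->
  exists d (B : 'M[F]_(d, k)), row_free B /\ V = [set x *m B | x : 'rV_d].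
Proof.
move=> V0 V_lin.
pose A := \matrix_(i < #|V|) (enum_val i : 'rV_k).
have rowA i : row i A = enum_val i by rewrite rowK.
have combV (w : 'rV_#|V|) : w *m A \in V.
  rewrite mulmx_sum_row; apply: (big_ind (fun u => u \in V)) => //.
    by move=> u v uV vV; rewrite -(scale1r u) V_lin.
  by move=> i _; rewrite -[_ *: _]addr0 V_lin // rowA (@enum_valP _ (mem V)).
exists (\rank A), (row_base A); split; first exact: row_base_free.
apply/setP => v; apply/idP/imsetP => [vV | [x _ ->]].
  have : (v <= row_base A)%MS.
    by rewrite eq_row_base -(enum_rankK_in vV vV) -rowA row_sub.
  by case/submxP => x ->; exists x.
have : (x *m row_base A <= A)%MS by rewrite -(eq_row_base A) submxMl.
by case/submxP => w ->.
Qed.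

Lemma card_row_free_image d (B : 'M[F]_(d, k)) : row_free B ->
  #|[set x *m B | x : 'rV_d]| = (#|F| ^ d)%N.
Proof. by move=> freeB; rewrite card_imset ?card_mx ?mul1n //; exact: row_free_inj. Qed.
End RowSpace.

Section HittingBound.
Variable p : nat.
Hypothesis p_pr : prime p.

Definition hitting_poly d k (B : 'M['F_p]_(d, k)) (N : {set 'F_p}) : {mpoly 'F_p[d]} :=
  \prod_(i < k) \prod_(n in N) (\sum_(j < d) B j i *: 'X_j - n%:MP).

Lemma msize_hitting_poly d k (B : 'M['F_p]_(d, k)) (N : {set 'F_p}) :
  (msize (hitting_poly B N) <= (k * #|N|).+1)%N.
Proof.
apply: leq_trans (@msize_prod_leq _ _ _ _ _ _ (fun _ => #|N|) _) _.
  move=> i _; apply: leq_trans (@msize_prod_leq _ _ _ _ _ _ (fun _ => 1%N) _) _.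
    by move=> n _; exact: msize_affine.
  by rewrite -big_enum sum1_size /= cardE.
by rewrite sum_nat_const card_ord.
Qed.

Lemma meval_hitting_poly d k (B : 'M['F_p]_(d, k)) (N : {set 'F_p})
    (f : {ffun 'I_d -> 'F_p}) :
  (hitting_poly B N).@[f] = \prod_(i < k) \prod_(n in N) (((\row_j f j) *m B) 0 i - n).
Proof.
rewrite (big_morph _ (mevalM f) (meval1 f)); apply: eq_bigr => i _.
rewrite (big_morph _ (mevalM f) (meval1 f)); apply: eq_bigr => n _.
rewrite mevalB mevalC raddf_sum /= mxE; congr (_ - _); apply: eq_bigr => j _.
by rewrite mevalZ mevalXU mxE mulrC.
Qed.

(* Otherwise
   the hitting polynomial has small degree, so its values sum to 0, whereas it
   vanishes everywhere except at x = 0. *)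
Lemma hitting_bound d k (B : 'M['F_p]_(d, k)) (N : {set 'F_p}) : 0 \notin N ->
    (forall x : 'rV_d, x != 0 -> exists i, (x *m B) 0 i \in N) ->
  (d * p.-1 <= k * #|N|)%N.
Proof.
move=> N0 hit; rewrite leqNgt; apply/negP => small_N.
have := sum_meval_eq0 p_pr (leq_trans (msize_hitting_poly B N) small_N).
under eq_bigr do rewrite meval_hitting_poly.
rewrite (bigD1 [ffun=> 0]) //= [X in _ + X]big1 => [|f f0]; last first.
  have x0 : \row_j f j != 0.
    apply: contra f0 => /eqP/rowP f0; apply/eqP/ffunP => j.
    by move: (f0 j); rewrite !mxE ffunE.
  have [i hit_i] := hit _ x0.
  by rewrite (bigD1 i) //= (bigD1 _ hit_i) //= subrr !mul0r.
rewrite addr0 => /eqP; apply/negP.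
have -> : \row_j ([ffun=> 0] : {ffun 'I_d -> 'F_p}) j = 0.
  by apply/rowP => j; rewrite !mxE ffunE.
rewrite mul0mx prodf_seq_neq0; apply/allP => i _ /=.
rewrite mxE prodf_seq_neq0; apply/allP => n _; apply/implyP => nN.
by rewrite sub0r oppr_eq0; apply: contraNneq N0 => <-.
Qed.
End HittingBound.

Section IndependentSubspaces.
Variables (p : nat) (S : {set 'F_p}).
Hypothesis p_pr : prime p.

Definition non_neighbours : {set 'F_p} := [set x | (x != 0) && (x \notin S)].

(* A nonzero vector of an independent set containing 0 is not adjacent to 0
   in G^k, so one of its coordinates is a non-neighbour of 0. *)
Lemma independent_nonzero_coord k (V : {set 'rV['F_p]_k}) v : 0 \in V ->
  is_independent S V -> v \in V -> v != 0 -> exists i, v 0 i \in non_neighbours.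
Proof.
move=> V0 /forallP indV vV v0.
move: (indV v); rewrite vV /= => /forallP /(_ 0); rewrite V0 /strong_adj v0 /=.
rewrite negb_forall => /existsP [i]; rewrite mxE /cay_adj subr0 negb_or => hi.
by exists i; rewrite inE.
Qed.

Lemma independent_subspace_card k (V : {set 'rV['F_p]_k}) :
    is_subspace V -> is_independent S V ->
  exists d, #|V| = (p ^ d)%N /\ (d * p.-1 <= k * #|non_neighbours|)%N.
Proof.
case/andP => V0 /forallP V_lin indV.
have [d [B [freeB defV]]] : exists d (B : 'M['F_p]_(d, k)),
    row_free B /\ V = [set x *m B | x : 'rV_d].
  apply: subspace_row_free_image => // a u v uV vV.
  by move: (V_lin a) => /forallP /(_ u) /forallP /(_ v); rewrite uV vV.
exists d; split; first by rewrite defV card_row_free_image // card_Fp.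
apply: (hitting_bound p_pr) => [|x x0]; first by rewrite inE eqxx.
apply: independent_nonzero_coord V0 indV _ _; first by rewrite defV; apply/imsetP; exists x.
by apply: contra x0 => /eqP xB0; apply/eqP/(row_free_inj freeB); rewrite xB0 mul0mx.
Qed.
End IndependentSubspaces.

Lemma logn_fact_prime p : prime p -> logn p p`! = 1%N.
Proof.
move=> p_pr; rewrite logn_fact //.
rewrite big_ltn; last by rewrite ltnS prime_gt0.
rewrite expn1 divnn prime_gt0 // big_nat_cond big1 ?addn0 // => k /andP[/andP[k_gt1 _] _].
by apply: divn_small; rewrite -[X in (X < _)%N]expn1 ltn_exp2l // prime_gt1.
Qed.

Lemma card_perm_type (T : finType) : #|{perm T}| = (#|T|)`!.
Proof.
rewrite -cardsT -card_perm; apply: eq_card => s; rewrite !inE.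
by apply/esym/fintype.subsetP => x; rewrite inE.
Qed.

Section SylowMultiplier.
Variables (p : nat) (S : {set 'F_p}).
Hypothesis p_pr : prime p.
Hypothesis S0 : 0 \notin S.
Variable f : {perm 'F_p}.
Hypothesis f_compl : forall u v, cay_adj S u v = cay_cadj S (f u) (f v).

(* As G has no loops, f also maps the non-edges of G to edges. *)
Lemma compl_perm_adj u v : cay_adj S (f u) (f v) = cay_cadj S u v.
Proof.
rewrite /cay_cadj; have [->|uv] := eqVneq u v; first by rewrite /cay_adj subrr (negbTE S0).
have := f_compl u v; rewrite /cay_cadj (inj_eq perm_inj) uv /= /cay_adj => ->.
by rewrite negbK.
Qed.

Definition translation (b : 'F_p) : {perm 'F_p} := perm (addIr b).

Lemma translationE b x : translation b x = x + b.
Proof. by rewrite permE. Qed.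

Definition translations : {set {perm 'F_p}} := [set translation b | b : 'F_p].

Definition cay_auts : {set {perm 'F_p}} :=
  [set g : {perm 'F_p} | [forall u, forall v, cay_adj S (g u) (g v) == cay_adj S u v]].

Lemma cay_autsP (g : {perm 'F_p}) :
  reflect (forall u v, cay_adj S (g u) (g v) = cay_adj S u v) (g \in cay_auts).
Proof.
rewrite inE; apply: (iffP forallP) => [g_aut u v | g_aut u]; last first.
  by apply/forallP => v; rewrite g_aut.
by move/forallP: (g_aut u) => /(_ v) /eqP.
Qed.

Lemma translations_group_set : group_set translations.
Proof.
apply/group_setP; split.
  by apply/imsetP; exists 0 => //; apply/permP => x; rewrite translationE perm1 addr0.
move=> _ _ /imsetP[a _ ->] /imsetP[b _ ->]; apply/imsetP; exists (a + b) => //.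
by apply/permP => z; rewrite permM !translationE addrA.
Qed.
Canonical translations_group := Group translations_group_set.

Lemma cay_auts_group_set : group_set cay_auts.
Proof.
apply/group_setP; split; first by apply/cay_autsP => u v; rewrite !perm1.
move=> x y /cay_autsP x_aut /cay_autsP y_aut; apply/cay_autsP => u v.
by rewrite !permM y_aut x_aut.
Qed.
Canonical cay_auts_group := Group cay_auts_group_set.

Lemma card_translations : #|translations| = p.
Proof.
rewrite card_imset ?card_Fp // => a b /permP /(_ 0).
by rewrite !translationE !add0r.
Qed.

Lemma translations_sub_auts : translations \subset cay_auts.
Proof.
apply/fintype.subsetP => _ /imsetP[b _ ->]; apply/cay_autsP => u v.
by rewrite !translationE /cay_adj opprD addrACA subrr addr0.
Qed.

Lemma conj_translations_sub_auts : (translations :^ f \subset cay_auts)%g.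
Proof.
apply/fintype.subsetP => _ /imsetP[_ /imsetP[b _ ->] ->]; apply/cay_autsP => u v.
rewrite /conjg !permM -[in RHS](permKV f u) -[in RHS](permKV f v) !compl_perm_adj.
by rewrite /cay_cadj !translationE opprD addrACA subrr addr0 (inj_eq (addIr b)).
Qed.

(* Since #|Aut G| divides p! and is divisible by p, its p-part is p: the
   translations form a Sylow p-subgroup. *)
Lemma cay_auts_p_part : ((#|cay_auts|)`_p)%N = p.
Proof.
apply/eqP; rewrite eqn_dvd; apply/andP; split.
  have dvd_fact : (#|cay_auts| %| p`!)%N.
    have := cardSg (finset.subsetT cay_auts_group).
    by rewrite cardsT card_perm_type card_Fp.
  have := partn_dvd p (fact_gt0 p) dvd_fact.
  by rewrite (p_part p (factorial p)) logn_fact_prime // expn1.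
have dvd_p : (p %| #|cay_auts|)%N.
  by rewrite -{1}card_translations cardSg // translations_sub_auts.
by have := partn_dvd p (cardG_gt0 _) dvd_p; rewrite part_pnat_id // pnat_id.
Qed.

Lemma Fp_natr_val (x : 'F_p) : x = (val x)%:R.
Proof.
apply: val_inj; rewrite /= val_Fp_nat // modn_small //.
by have := ltn_ord x; rewrite [X in (_ < X)%N -> _]Fp_cast.
Qed.

Lemma affine_of_conj_translation (h : {perm 'F_p}) a :
  (translation 1%R ^ h)%g = translation a -> forall w, h w = h 0 + w * a.
Proof.
move=> conj_h.
have h_succ w : h (w + 1) = h w + a.
  have := congr1 (fun g : {perm 'F_p} => g (h w)) conj_h.
  by rewrite /conjg !permM permK !translationE.
move=> w; rewrite (Fp_natr_val w); elim: (val w) => [|n IHn].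
  by rewrite mul0r addr0.
by rewrite mulrSr h_succ IHn mulrDl mul1r addrA.
Qed.

(* The translations and their conjugates by f are Sylow p-subgroups of
   Aut(G), hence conjugate by some x in Aut(G).  Then h = f x^-1 still maps G
   onto its complement and normalises the translations, so it is affine,
   w |-> h 0 + w a; as h maps edges to non-edges, a S lies in the
   non-neighbours of 0. *)
Lemma multiplier : exists a : 'F_p, forall s, s \in S -> s * a \in non_neighbours S.
Proof.
have sylT : (p.-Sylow(cay_auts) translations)%g.
  by rewrite pHallE translations_sub_auts cay_auts_p_part /= card_translations.
have sylTf : (p.-Sylow(cay_auts) (translations :^ f)%G)%g.
  by rewrite pHallE conj_translations_sub_auts /= cardJg cay_auts_p_part card_translations.
have [x x_aut conj_x] := Sylow_trans sylT sylTf.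
pose h := (f * x^-1)%g.
have h_compl u v : cay_adj S u v = cay_cadj S (h u) (h v).
  rewrite f_compl /h !permM /cay_cadj !(inj_eq perm_inj).
  by have /cay_autsP x_inv := groupVr x_aut; move: (x_inv (f u) (f v)); rewrite /cay_adj => ->.
have : (translation 1%R ^ h)%g \in translations.
  have h_norm : (translations :^ h)%g = translations by rewrite /h conjsgM conj_x conjsgK.
  by rewrite -h_norm memJ_conjg imset_f.
case/imsetP => a _ /affine_of_conj_translation h_affine.
exists a => s sS; have := h_compl s 0.
rewrite /cay_adj subr0 sS /cay_cadj (h_affine s) (h_affine 0) mul0r addr0 inE.
rewrite [h 0 + s * a - h 0]addrAC subrr add0r -[X in _ != X]addr0 (inj_eq (addrI _)).
by move=> /esym.
Qed.
End SylowMultiplier.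

Section Counting.
Variables (p : nat) (S : {set 'F_p}).
Hypothesis p_pr : prime p.
Hypothesis S0 : 0 \notin S.

(* The vertex set splits into 0, the neighbours S and the non-neighbours of 0. *)
Lemma card_non_neighbours_add : (#|non_neighbours S| + #|S|).+1 = p.
Proof.
have compl_S : ~: S = 0 |: non_neighbours S.
  by apply/setP => x; rewrite !inE; case: (eqVneq x 0) => [->|].
have := cardsC S; rewrite compl_S cardsU1 inE eqxx card_Fp // => card_S.
by apply: etrans card_S; rewrite /= add1n addnS addnC.
Qed.

Lemma card_neighbours (c : 'F_p) : #|[set w : 'F_p | c - w \in S]| = #|S|.
Proof.
have -> : [set w | c - w \in S] = (fun s => c - s) @: S.
  apply/setP => w; rewrite inE; apply/idP/imsetP => [cwS | [s sS ->]].
    by exists (c - w) => //; rewrite opprB addrC subrK.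
  by rewrite opprB addrC subrK.
by rewrite card_imset // => x y /addrI /oppr_inj.
Qed.

(* A self-complementary G is regular of degree (p - 1)/2: the image f 0 of 0
   has #|S| neighbours in G and #|S| non-neighbours besides itself. *)
Lemma self_complementary_degree : self_complementary S -> (#|S| + #|S|).+1 = p.
Proof.
case=> f f_compl; set c := f 0.
have deg_compl : #|S| = #|[set w | cay_cadj S c w]|.
  rewrite -(card_neighbours 0) -[RHS](card_preimset _ (@perm_inj _ f)).
  by apply: eq_card => v; rewrite !inE -/(cay_adj S 0 v) f_compl.
have non_adj_c : [set w | c - w \notin S] = c |: [set w | cay_cadj S c w].
  apply/setP => w; rewrite !inE /cay_cadj.
  by case: (eqVneq w c) => [->|/=]; rewrite ?subrr ?S0 ?eqxx // eq_sym => ->.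
have := cardsC [set w | c - w \in S].
rewrite card_neighbours card_Fp //.
have -> : ~: [set w | c - w \in S] = [set w | c - w \notin S].
  by apply/setP => w; rewrite !inE.
rewrite non_adj_c cardsU1 inE /cay_cadj eqxx /= -deg_compl => card_S.
by apply: etrans card_S; rewrite add1n addnS.
Qed.

Lemma card_non_neighbours : self_complementary S -> #|non_neighbours S| = #|S|.
Proof.
move/self_complementary_degree/esym/(etrans card_non_neighbours_add).
by move=> /eqP; rewrite eqSS eqn_add2r => /eqP.
Qed.
End Counting.

Section AlphaLin.
Variables (p : nat) (S : {set 'F_p}).
Hypothesis p_pr : prime p.
Hypothesis S0 : 0 \notin S.
Hypothesis S_sc : self_complementary S.

(* Upper bound: alpha_lin(G^k)^2 <= p^k, since an independent subspace has
   dimension d with 2 d <= k. *)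
Lemma alpha_lin_sq_le k : (alpha_lin S k ^ 2 <= p ^ k)%N.
Proof.
have N_S := card_non_neighbours p_pr S0 S_sc.
have deg_S := self_complementary_degree p_pr S0 S_sc.
have S_gt0 : (0 < #|S|)%N.
  by rewrite lt0n; apply: contraTneq (prime_gt1 p_pr) => S_0; rewrite -deg_S S_0.
have p_1 : p.-1 = (2 * #|S|)%N by rewrite -[in LHS]deg_S addnn mul2n.
rewrite /alpha_lin; apply: (big_ind (fun x => x ^ 2 <= p ^ k)%N) => //.
  by move=> x y; rewrite /maxn; case: ifP.
move=> V /andP[V_sub V_ind].
have [d [-> bound_d]] := independent_subspace_card p_pr V_sub V_ind.
rewrite -expnM leq_pexp2l ?prime_gt0 // -(leq_pmul2r S_gt0) -mulnA -p_1.
by rewrite -N_S.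
Qed.

(* Lower bound: with a as in [multiplier], the line spanned by (1, a) is an
   independent subspace of G^2 of size p: two distinct points x (1, a) and
   y (1, a) differ by a non-neighbour in the first coordinate if x - y is not
   in S, and in the second coordinate otherwise. *)
Lemma alpha_lin2_ge : (p <= alpha_lin S 2)%N.
Proof.
have [f f_compl] := S_sc.
have [a a_mult] := multiplier p_pr S0 f_compl.
pose w : 'rV['F_p]_2 := \row_j (if j == ord0 then 1 else a).
pose V := [set x *: w | x : 'F_p].
have wE x i : (x *: w) 0 i = x * (if i == ord0 then 1 else a) by rewrite !mxE.
have card_V : #|V| = p.
  rewrite card_imset ?card_Fp // => x y /rowP /(_ ord0).
  by rewrite !mxE eqxx !mulr1.
rewrite -{1}card_V /alpha_lin.
apply: (@leq_bigmax_cond _ _ (fun V : {set 'rV['F_p]_2} => #|V|) V).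
apply/andP; split.
  apply/andP; split; first by apply/imsetP; exists 0; rewrite ?scale0r.
  apply/forallP => c; apply/forallP => u; apply/forallP => v.
  apply/implyP => /imsetP[x _ ->]; apply/implyP => /imsetP[y _ ->].
  by apply/imsetP; exists (c * x + y); rewrite // scalerDl scalerA.
apply/forallP => u; apply/implyP => /imsetP[x _ ->].
apply/forallP => v; apply/implyP => /imsetP[y _ ->].
rewrite /strong_adj negb_and -implybE; apply/implyP => neq_xy.
rewrite negb_forall; apply/existsP.
have xy : x != y by apply: contra neq_xy => /eqP ->.
have [xyS | xyNS] := boolP (x - y \in S); last first.
  by exists ord0; rewrite !wE eqxx !mulr1 /cay_adj negb_or xyNS andbT.
exists ord_max; rewrite !wE /= /cay_adj -mulrBl.
have := a_mult _ xyS; rewrite inE => /andP[xya0 xyaNS].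
by rewrite negb_or xyaNS andbT -subr_eq0 -mulrBl.
Qed.
End AlphaLin.

(* From a^2 <= p^k we get a^(1/k) <= sqrt p, comparing 2k-th powers. *)
Lemma powR_inv_le_sqrt (R : realType) (p a k : nat) : (0 < k)%N ->
  (a ^ 2 <= p ^ k)%N -> (a%:R : R) `^ (k%:R)^-1 <= Num.sqrt (p%:R).
Proof.
move=> k_gt0 a_le.
have k2_gt0 : (0 < 2 * k)%N by rewrite muln_gt0.
rewrite -(ler_pXn2r k2_gt0) ?nnegrE ?powR_ge0 ?sqrtr_ge0 //.
rewrite -powR_mulrn ?powR_ge0 // -powRrM.
have -> : (k%:R : R)^-1 * (2 * k)%:R = 2%:R.
  by rewrite natrM mulrCA mulVf ?mulr1 // pnatr_eq0 -lt0n.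
by rewrite powR_mulrn // exprM sqr_sqrtr // -!natrX ler_nat.
Qed.

Unset Implicit Arguments.

Theorem mainTheorem6 (R : realType) (p : nat) (S : {set 'F_p}) :
  prime p -> symmetric_conn S -> self_complementary S ->
  Theta_lin R S = Num.sqrt (p%:R : R).
Proof.
move=> p_pr [S0 _] S_sc.
have alpha2 : alpha_lin S 2 = p.
  apply/eqP; rewrite eqn_leq alpha_lin2_ge // andbT.
  by rewrite -(@leq_exp2r _ _ 2) // alpha_lin_sq_le.
rewrite /Theta_lin; set X := (X in sup X).
have sqrt_in : X (Num.sqrt p%:R) by exists 2%N; rewrite alpha2 powR12_sqrt.
have sqrt_ub : ubound X (Num.sqrt p%:R).
  by move=> _ [k [k_gt0 ->]]; apply: powR_inv_le_sqrt => //; exact: alpha_lin_sq_le.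
apply/le_anti/andP; split.
  by apply: ge_sup => //; exists (Num.sqrt p%:R).
by apply: ub_le_sup => //; exists (Num.sqrt p%:R).
Qed.
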